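(* Let $M$ be a Mealy machine and let $A$ be an NFA over $I_M$. Let $s,t\in S_M$ and $a,b\in S_A$, and suppose that $\mathcal{L}_A(b)\subseteq \mathcal{L}_A(a)$ and that $(s,a)\nsim (t,b)$. Then there exists a word $\alpha\in \mathcal{L}_A(b)$ such that $\alpha$ witnesses $(s,a)\nsim(t,b)$ (i.e. $\alpha\in\mathcal{L}_A(a)\cap\mathcal{L}_A(b)$ and $\lambda_M(s,\alpha)\neq\lambda_M(t,\alpha)$) and $|\alpha|\leq |S_M|\,|S_A|$.
   Context: A Mealy machine is $M=(I_M,O_M,S_M,\delta_M,\lambda_M,r_M)$ with finite input/output alphabets $I_M,O_M$, finite state set $S_M$, next-state function $\delta_M:S_M\times I_M\to S_M$, output function $\lambda_M:S_M\times I_M\to O_M$, initial state $r_M$; $\delta_M,\lambda_M$ are extended to words in the usual way ($\delta_M(s,\epsilon)=s$, $\lambda_M(s,\epsilon)=\epsilon$, $\delta_M(s,\alpha x)=\delta_M(\delta_M(s,\alpha),x)$, $\lambda_M(s,\alpha x)=\lambda_M(s,\alpha)\lambda_M(\delta_M(s,\alpha),x)$). An NFA over an alphabet $\varphi$ is $A=(\varphi,S_A,\Delta_A,r_A)$ with $\Delta_A:S_A\times\varphi\to 2^{S_A}$ extended to words; all states are accepting, so for $s\in S_A$ the language $\mathcal{L}_A(s)$ is the set of words $\alpha$ with $\Delta_A(s,\alpha)\neq\emptyset$ (a prefix-closed set containing $\epsilon$), and $\mathcal{L}_A=\mathcal{L}_A(r_A)$. For pairs (locations) $(s,a),(t,b)\in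 S_M\times S_A$: a word $\alpha$ witnesses $(s,a)\nsim(t,b)$ if $\alpha\in\mathcal{L}_A(a)\cap\mathcal{L}_A(b)$ and $\lambda_M(s,\alpha)\neq\lambda_M(t,\alpha)$; the pairs are incompatible, $(s,a)\nsim(t,b)$, if such a witness exists, and compatible, $(s,a)\sim(t,b)$, otherwise. *)

From mathcomp Require Import all_boot.
Set Implicit Arguments. Unset Strict Implicit. Unset Printing Implicit Defensive.

Record Mealy := {
  M_I : finType; M_O : finType; M_S : finType;
  M_delta : M_S -> M_I -> M_S;
  M_lambda : M_S -> M_I -> M_O;
  M_r : M_S }.

Fixpoint delta_w (M : Mealy) (s : M_S M) (w : seq (M_I M)) : M_S M :=
  if w is x :: w' then delta_w (M_delta s x) w' else s.

(* Extended output function: lambda(s, x alpha) = lambda(s,x) lambda(delta(s,x),alpha)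
   (equivalent to the paper's right-recursive definition). *)
Fixpoint lambda_w (M : Mealy) (s : M_S M) (w : seq (M_I M)) : seq (M_O M) :=
  if w is x :: w' then M_lambda s x :: lambda_w (M_delta s x) w' else [::].

(* NFA over alphabet Phi; all states accepting. *)
Record NFA (Phi : finType) := {
  A_S : finType;
  A_Delta : A_S -> Phi -> {set A_S};
  A_r : A_S }.

Fixpoint Delta_set (Phi : finType) (A : NFA Phi) (X : {set A_S A}) (w : seq Phi)
  : {set A_S A} :=
  if w is x :: w' then Delta_set (\bigcup_(q in X) A_Delta q x) w' else X.

Definition Delta_w (Phi : finType) (A : NFA Phi) (s : A_S A) (w : seq Phi) :=
  Delta_set [set s] w.

Definition lang (Phi : finType) (A : NFA Phi) (s : A_S A) : seq Phi -> Prop :=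
  fun w => Delta_w s w != set0.

Definition witness (M : Mealy) (A : NFA (M_I M)) (s : M_S M) (a : A_S A)
  (t : M_S M) (b : A_S A) (alpha : seq (M_I M)) : Prop :=
  lang a alpha /\ lang b alpha /\ lambda_w s alpha <> lambda_w t alpha.

Definition incompatible (M : Mealy) (A : NFA (M_I M)) (s : M_S M) (a : A_S A)
  (t : M_S M) (b : A_S A) : Prop :=
  exists alpha, witness s a t b alpha.

From mathcomp Require Import all_boot.
Set Implicit Arguments. Unset Strict Implicit. Unset Printing Implicit Defensive.

(* Partition refinement.  Call locations (s, c) and (t, c) k-equivalent when no
   word of length at most k accepted from c separates s from t.  Each
   (k+1)-equivalence is computed from k-equivalence alone, so once a refinement
   step changes nothing, the relation is stable forever.  Every strict
   refinement strictly increases the number of classes, which is at most the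
   number |S_M| |S_A| of locations; hence the relation is stable from some
   j <= |S_M| |S_A| on, and a separating word of any length yields one of
   length at most |S_M| |S_A|.  Since L_A(b) is included in L_A(a), such a word
   accepted from b is a witness. *)

Section Classes.

Variable T : finType.

Definition classes (R : rel T) : {set {set T}} := [set [set y | R x y] | x : T].

Lemma card_classes_le (R : rel T) : #|classes R| <= #|T|.
Proof. exact: leq_imset_card. Qed.

Variables R R' : rel T.
Hypotheses (transR : left_transitive R) (reflR' : reflexive R').
Hypothesis sub_R'R : subrel R' R.

Definition saturation (X : {set T}) : {set T} := [set y | [exists x in X, R x y]].

Lemma saturation_class z : saturation [set y | R' z y] = [set y | R z y].
Proof.
apply/setP => y; rewrite !inE; apply/existsP/idP => [[x /andP []]|Rzy].
  by rewrite inE => /sub_R'R /transR ->.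
by exists z; rewrite inE reflR' Rzy.
Qed.

Lemma classes_saturation : classes R = saturation @: classes R'.
Proof.
by rewrite /classes -imset_comp; apply: eq_imset => z; rewrite /= saturation_class.
Qed.

Lemma card_classes_refine : #|classes R| <= #|classes R'|.
Proof. by rewrite classes_saturation leq_imset_card. Qed.

Lemma card_classes_refine_proper x y :
  R x y -> ~~ R' x y -> #|classes R| < #|classes R'|.
Proof.
move=> Rxy nR'xy; rewrite ltn_neqAle card_classes_refine andbT.
apply: contra nR'xy; rewrite classes_saturation => /imset_injP inj.
have: [set u | R' x u] = [set u | R' y u].
  apply: inj; rewrite ?imset_f // !saturation_class.
  by apply/setP => u; rewrite !inE (transR Rxy).
by move/setP/(_ y); rewrite !inE reflR'.
Qed.

End Classes.

Lemma Delta_set_subset (Phi : finType) (A : NFA Phi) (X Y : {set A_S A}) w :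
  X \subset Y -> Delta_set X w \subset Delta_set Y w.
Proof.
elim: w X Y => [|x w IH] X Y //= sXY; apply: IH.
apply/subsetP => z /bigcupP [q qX zq]; apply/bigcupP; exists q => //.
exact: (subsetP sXY).
Qed.

Lemma mem_Delta_set (Phi : finType) (A : NFA Phi) (X : {set A_S A}) w z :
  z \in Delta_set X w -> exists2 q, q \in X & z \in Delta_w q w.
Proof.
elim: w X => [|x w IH] X /=; first by exists z; rewrite ?set11.
move=> /IH [p /bigcupP [q qX pq] zp]; exists q => //.
rewrite /Delta_w /= big_set1; apply: (subsetP (Delta_set_subset _ _)) zp.
by rewrite sub1set.
Qed.

Lemma lang_nil (Phi : finType) (A : NFA Phi) (c : A_S A) : lang c [::].
Proof. by apply/set0Pn; exists c; rewrite set11. Qed.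

Lemma lang_cons (Phi : finType) (A : NFA Phi) (c : A_S A) x w :
  lang c (x :: w) <-> exists2 c', c' \in A_Delta c x & lang c' w.
Proof.
rewrite /lang /Delta_w /= big_set1; split.
  case/set0Pn => z /mem_Delta_set [c' cc' zc'].
  by exists c'; last by apply/set0Pn; exists z.
move=> [c' cc' /set0Pn [z zc']]; apply/set0Pn; exists z.
by apply: (subsetP (Delta_set_subset _ _)) zc'; rewrite sub1set.
Qed.

Section Refinement.

Variables (M : Mealy) (A : NFA (M_I M)).

Local Notation loc := (M_S M * A_S A)%type.

Definition refine (R : rel loc) : rel loc := fun p q =>
  R p q && [forall x, ((A_Delta p.2 x != set0) ==> (M_lambda p.1 x == M_lambda q.1 x))
    && [forall c in A_Delta p.2 x, R (M_delta p.1 x, c) (M_delta q.1 x, c)]].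

Fixpoint kequiv k : rel loc :=
  if k is k'.+1 then refine (kequiv k') else fun p q => p.2 == q.2.

Definition agree_upto k (p q : loc) :=
  p.2 = q.2 /\
  forall w, size w <= k -> lang p.2 w -> lambda_w p.1 w = lambda_w q.1 w.

Lemma kequiv_agree k p q : kequiv k p q -> agree_upto k p q.
Proof.
elim: k p q => [|k IH] [s c] [t d] /=; first by move/eqP=> <-; split=> // -[].
case/andP => /IH [/= <- _] /forallP step; split=> // -[|x w] //= sw.
case/lang_cons => c' cc' lw.
have/andP [/implyP out /forallP next] := step x.
have/eqP -> : M_lambda s x == M_lambda t x by apply: out; apply/set0Pn; exists c'.
by have/IH [_ /= ->] := implyP (next c') cc'.
Qed.

Lemma kequiv_separating_word k p q :
  p.2 = q.2 -> ~~ kequiv k p q ->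
  exists w, [/\ size w <= k, lang p.2 w & lambda_w p.1 w <> lambda_w q.1 w].
Proof.
elim: k p q => [|k IH] [s c] [t d] /= eq_cd; first by rewrite eq_cd eqxx.
rewrite negb_and => /orP [/(IH (s, c) (t, d) eq_cd) [w [sw lw ne]]|].
  by exists w; split=> //; apply: leqW.
rewrite negb_forall => /existsP [x]; rewrite negb_and => /orP [|].
  rewrite negb_imply => /andP [/set0Pn [c' cc'] ne].
  exists [:: x]; split=> //; first by apply/lang_cons; exists c'; last exact: lang_nil.
  by case=> /eqP; apply/negP.
rewrite negb_forall_in => /existsP [c' /andP [cc']].
case/(IH (M_delta s x, c') (M_delta t x, c') erefl) => w [sw lw ne].
by exists (x :: w); split=> //=; [apply/lang_cons; exists c' | case].
Qed.

Lemma kequivP k p q : reflect (agree_upto k p q) (kequiv k p q).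
Proof.
apply: (iffP idP) => [|[eq_pq agree_pq]]; first exact: kequiv_agree.
apply/negPn/negP => /(kequiv_separating_word eq_pq) [w [sw lw []]].
exact: agree_pq.
Qed.

Lemma kequiv_refl k : reflexive (kequiv k).
Proof. by move=> p; apply/kequivP. Qed.

Lemma kequiv_left_trans k : left_transitive (kequiv k).
Proof.
have sym p q : kequiv k p q -> kequiv k q p.
  move/kequivP => [eq_pq agree_pq]; apply/kequivP; split=> // w sw lw.
  by rewrite agree_pq // eq_pq.
have trans p q r : kequiv k p q -> kequiv k q r -> kequiv k p r.
  move/kequivP => [eq_pq agree_pq] /kequivP [eq_qr agree_qr].
  apply/kequivP; split=> [|w sw lw]; first by rewrite eq_pq.
  by rewrite agree_pq // agree_qr // -eq_pq.
move=> p q Epq r; apply/idP/idP; first exact: trans (sym _ _ Epq).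
exact: trans.
Qed.

Lemma kequiv_antitone m n : m <= n -> subrel (kequiv n) (kequiv m).
Proof.
move=> le_mn p q /kequivP [eq_pq agree_pq]; apply/kequivP; split=> // w sw.
exact/agree_pq/(leq_trans sw).
Qed.

Lemma refine_ext (R R' : rel loc) : R =2 R' -> refine R =2 refine R'.
Proof.
move=> eqR p q; rewrite /refine eqR; congr andb; apply: eq_forallb => x.
by congr andb; apply: eq_forallb => c; rewrite eqR.
Qed.

Lemma kequiv_stable j :
  kequiv j.+1 =2 kequiv j -> forall k, subrel (kequiv j) (kequiv k).
Proof.
move=> stable; have stable_from m : kequiv (j + m) =2 kequiv j.
  elim: m => [|m IH]; first by rewrite addn0.
  by rewrite addnS => p q /=; rewrite (refine_ext IH); apply: stable.
move=> k p q; case: (leqP k j) => [le_kj|/ltnW le_jk]; first exact: kequiv_antitone.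
by rewrite -(subnKC le_jk) stable_from.
Qed.

Lemma kequiv_stabilizes : exists2 j, j <= #|{: loc}| & kequiv j.+1 =2 kequiv j.
Proof.
pose unstable j := [exists p, exists q, kequiv j p q && ~~ kequiv j.+1 p q].
have card_unstable k :
    (forall j, j < k -> unstable j) -> k <= #|classes (kequiv k)|.
  elim: k => [|k IH] unst //.
  have/existsP [p /existsP [q /andP [Epq nEpq]]] := unst k (ltnSn k).
  apply: leq_ltn_trans (IH (fun j ltjk => unst j (ltnW ltjk))) _.
  apply: card_classes_refine_proper Epq nEpq.
  - exact: kequiv_left_trans.
  - exact: kequiv_refl.
  - exact: kequiv_antitone.
have [/existsP [j stable_j]|] := boolP [exists j : 'I_#|{: loc}|.+1, ~~ unstable j].
  exists j; first by rewrite -ltnS.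
  move=> p q; apply/idP/idP; first exact: kequiv_antitone.
  move=> Epq; apply: contraNT stable_j => nEpq.
  by apply/existsP; exists p; apply/existsP; exists q; rewrite Epq.
move/existsPn => unst.
have := card_unstable #|{: loc}|.+1 (fun j ltj => negbNE (unst (Ordinal ltj))).
by rewrite ltnNge card_classes_le.
Qed.

End Refinement.

Arguments kequiv {M} A k.

Theorem theorem1 (M : Mealy) (A : NFA (M_I M)) (s t : M_S M) (a b : A_S A) :
  (forall w, lang b w -> lang a w) ->
  incompatible s a t b ->
  exists alpha, lang b alpha /\ witness s a t b alpha /\
    size alpha <= #|M_S M| * #|A_S A|.
Proof.
move=> sub_ba [al [_ [lb_al ne_al]]].
have [j le_j stable] := kequiv_stabilizes A.
have not_N : ~~ kequiv A #|{: M_S M * A_S A}| (s, b) (t, b).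
  apply/negP => /(kequiv_antitone le_j) /(kequiv_stable stable (size al)).
  by case/kequivP => _ /(_ al (leqnn _) lb_al).
have [w [sw lw ne]] := kequiv_separating_word (p := (s, b)) (q := (t, b)) erefl not_N.
by exists w; rewrite -card_prod; split=> //; split=> //; split=> //; apply: sub_ba.
Qed.
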